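(* Let $\pi=(\sigma,\mathbf z)\in\mathsf{G}_{r,n}$ and let $\mathbf f=f(\pi)$ be its minimum sequence. Then $\phi(\pi)\in\mathsf{G}_{r,n,\mathbf f}$, where $\phi=(\text{B-code})^{-1}\circ(\text{A-code})$.
   Context: $\mathsf{G}_{r,n}=C_r\wr\mathfrak S_n$: pairs $(\sigma,\mathbf z)$, $\sigma\in\mathfrak S_n$, $\mathbf z\in(\mathbb Z/r)^n$, written $\sigma_1^{[z_1]}\cdots\sigma_n^{[z_n]}$ (colors in $\{0,\dots,r-1\}$, read mod $r$). For a nondecreasing integer sequence $\mathbf f=(f_1,\dots,f_n)$ with $1\le f_1\le\cdots\le f_n\le n$, $\mathsf{G}_{r,n,\mathbf f}=\{(\sigma,\mathbf z)\in\mathsf{G}_{r,n}:\sigma(i)\le f_i\ \forall i\}$. The minimum sequence $f(\pi)$ of $\pi=(\sigma,\mathbf z)$ is the componentwise smallest such $\mathbf f$ with $\pi\in\mathsf{G}_{r,n,\mathbf f}$, i.e. $f(\pi)_i=\max\{\sigma_1,\dots,\sigma_i\}$. $\mathsf{CS}_{r,n}=\{(c_1^{[e_1]},\dots,c_n^{[e_n]}):1\le c_i\le i,\ 0\le e_i<r\}$. A-code: $\pi^{(n)}=\pi$; for $j=n,\dots,1$, if base value $j$ is at position $p$ of $\pi^{(j)}$ with color $t$, set $c_j=p,e_j=t$ and delete that letter to get $\pi^{(j-1)}$; A-code$(\pi)=(c_j^{[e_j]})_j$. B-code: $\pi^{(n)}=\pi$; for $j=n,\dots,1$, writing $\pi^{(j)}=\tau_1^{[y_1]}\cdots\tau_j^{[y_j]}$,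 $c_j$ = position of base value $j$, $z$ its color, $e_j\equiv-z\pmod r$ in $\{0,\dots,r-1\}$; if $c_j<j$, $\pi^{(j-1)}$ is obtained by replacing the letter at position $c_j$ by $\tau_j^{[y_j-e_j]}$ and deleting the last letter, and if $c_j=j$ by deleting the last letter; B-code$(\pi)=(c_j^{[e_j]})_j$. Both codes are bijections $\mathsf{G}_{r,n}\to\mathsf{CS}_{r,n}$. *)

From mathcomp Require Import all_boot.
Set Implicit Arguments. Unset Strict Implicit. Unset Printing Implicit Defensive.

(* A colored permutation pi = sigma_1^[z_1] ... sigma_n^[z_n] is represented by
   its one-line word: a sequence of letters (base value, color).
   Base values are 1..n, colors are in {0,...,r-1}. *)
Definition letter := (nat * nat)%type.
Definition word := seq letter.

Definition base (w : word) : seq nat := map fst w.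

Definition in_G (r n : nat) (w : word) : bool :=
  (size w == n) && perm_eq (base w) (iota 1 n) && all (fun l => l.2 < r) w.

(* membership in G_{r,n,f}: sigma(i) <= f_i for all i (1-based, here 0-based indices) *)
Definition in_Gf (r n : nat) (f : seq nat) (w : word) : bool :=
  in_G r n w && [forall i : 'I_n, nth 0 (base w) i <= nth 0 f i].

Definition minseq (w : word) : seq nat :=
  mkseq (fun i => \max_(k < i.+1) nth 0 (base w) k) (size w).

(* colored code sequences CS_{r,n}: list (c_1^[e_1], ..., c_n^[e_n]) *)
Definition code := seq (nat * nat).

Definition delete_at (p : nat) (w : word) : word := take p w ++ drop p.+1 w.

(* A-code: for j = n..1, c_j = (1-based) position of base value j in pi^(j),
   e_j = its color, then delete that letter. Returns (c_1^[e_1], ..., c_j^[e_j]). *)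
Fixpoint acode_rec (j : nat) (w : word) : code :=
  match j with
  | 0 => [::]
  | j'.+1 =>
      let p := index j (base w) in
      rcons (acode_rec j' (delete_at p w)) (p.+1, (nth (0,0) w p).2)
  end.

Definition Acode (n : nat) (w : word) : code := acode_rec n w.

(* B-code: for j = n..1, c_j = (1-based) position of base value j in pi^(j),
   z its color, e_j = -z mod r in {0..r-1}; if c_j < j, replace the letter at
   position c_j by tau_j^[y_j - e_j] (tau_j^[y_j] the last letter) and delete
   the last letter; if c_j = j, just delete the last letter. *)
Fixpoint bcode_rec (r j : nat) (w : word) : code :=
  match j with
  | 0 => [::]
  | j'.+1 =>
      let p := index j (base w) in               (* c_j = p.+1 *)
      let z := (nth (0,0) w p).2 in
      let e := (r - z %% r) %% r in
      let lst := nth (0,0) w j' in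
      let w' := if p.+1 < j
                then take j' (set_nth (0,0) w p (lst.1, (lst.2 + r - e) %% r))
                else take j' w in
      rcons (bcode_rec r j' w') (p.+1, e)
  end.

Definition Bcode (r n : nat) (w : word) : code := bcode_rec r n w.

From mathcomp Require Import all_boot.
Set Implicit Arguments. Unset Strict Implicit. Unset Printing Implicit Defensive.

(* Both codes read off, for j = n, ..., 1, the position of the largest value j;
   the A-code then deletes that letter, while the B-code overwrites it with the
   last letter.  So if the B-code of pi' equals the A-code of pi, then at every
   stage j sits at the same position p in both words.  A letter of pi' before p
   is untouched by the B-code step and the prefix of pi before p is untouched by
   the deletion, so induction applies to it; a letter at or after p is at most j,
   while the prefix maximum of pi already reaches j at p.  Existence of pi' holds
   because the A-code lands in CS_{r,n} and each B-code step can be undone, so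
   the B-code maps onto CS_{r,n}. *)

Section SeqFacts.

Variables (T : eqType) (x0 : T).

Lemma perm_nth_take_drop (s : seq T) p : p < size s ->
  perm_eq s (nth x0 s p :: take p s ++ drop p.+1 s).
Proof.
move=> lt_p; rewrite -{1}(cat_take_drop p s) (drop_nth x0 lt_p).
by rewrite -cat1s perm_catCA.
Qed.

Lemma perm_nth_set_nth (s : seq T) p y : p < size s ->
  perm_eq (nth x0 s p :: set_nth x0 s p y) (y :: s).
Proof.
move=> lt_p; apply/permP => a; rewrite set_nthE lt_p /=.
rewrite -[in RHS](cat_take_drop p s) (drop_nth x0 lt_p) !count_cat /=.
by rewrite addnCA [RHS]addnCA; congr (_ + _); apply: addnCA.
Qed.

Lemma set_nth_rcons (s : seq T) x p y : p < size s ->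
  set_nth x0 (rcons s x) p y = rcons (set_nth x0 s p y) x.
Proof. by elim: s p => [|z s IH] [|p] //= lt_p; rewrite IH. Qed.

Lemma set_nth_nth (s : seq T) p : p < size s -> set_nth x0 s p (nth x0 s p) = s.
Proof. by move=> lt_p; rewrite set_nthE lt_p -drop_nth ?cat_take_drop. Qed.

Lemma all_set_nth (a : pred T) (s : seq T) p y : p < size s ->
  all a s -> a y -> all a (set_nth x0 s p y).
Proof.
move=> lt_p /allP a_s a_y; rewrite set_nthE lt_p all_cat /= a_y.
by apply/andP; split; apply/allP => x; [move/mem_take | move/mem_drop]; apply: a_s.
Qed.

End SeqFacts.

Lemma iota_rcons m n : iota m n.+1 = rcons (iota m n) (m + n).
Proof. by rewrite -addn1 iotaD cats1. Qed.

Lemma perm_cons_iota n (t : seq nat) :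
  perm_eq (n.+1 :: t) (iota 1 n.+1) = perm_eq t (iota 1 n).
Proof. by rewrite iota_rcons perm_sym perm_rcons perm_sym perm_cons. Qed.

Definition base_perm (n : nat) (w : word) : bool := perm_eq (base w) (iota 1 n).

Definition colors_lt (r : nat) (w : word) : bool := all (fun l : letter => l.2 < r) w.

Lemma nth_base (w : word) i : nth 0 (base w) i = (nth (0,0) w i).1.
Proof. by elim: w i => [|x w IH] [|i] //=. Qed.

Lemma base_set_nth (w : word) p y :
  p < size w -> base (set_nth (0,0) w p y) = set_nth 0 (base w) p y.1.
Proof. by elim: w p => [|x w IH] [|p] //= lt_p; rewrite IH. Qed.

Lemma base_delete_at p (w : word) :
  base (delete_at p w) = take p (base w) ++ drop p.+1 (base w).
Proof. by rewrite /base map_cat map_take map_drop. Qed.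

Lemma size_base_perm n w : base_perm n w -> size w = n.
Proof. by move/perm_size; rewrite size_map size_iota. Qed.

Lemma in_GE r n w : in_G r n w = base_perm n w && colors_lt r w.
Proof.
rewrite /in_G -/(base_perm n w) -/(colors_lt r w).
by case: (boolP (base_perm n w)) => [/size_base_perm ->|]; rewrite ?eqxx ?andbF.
Qed.

Section TopLetter.

Variables (n : nat) (w : word).
Hypothesis w_perm : base_perm n.+1 w.

Lemma top_in_base : n.+1 \in base w.
Proof. by rewrite (perm_mem w_perm) mem_iota add1n ltnSn. Qed.

Lemma index_top_lt : index n.+1 (base w) < n.+1.
Proof. by rewrite -{2}(size_base_perm w_perm) -(size_map fst) index_mem top_in_base. Qed.

Lemma nth_index_top : (nth (0,0) w (index n.+1 (base w))).1 = n.+1.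
Proof. by rewrite -nth_base nth_index ?top_in_base. Qed.

Lemma base_le_top i : i < n.+1 -> nth 0 (base w) i <= n.+1.
Proof.
move=> lt_i; have : nth 0 (base w) i \in iota 1 n.+1.
  by rewrite -(perm_mem w_perm) mem_nth // size_map (size_base_perm w_perm).
by rewrite mem_iota add1n ltnS => /andP[].
Qed.

Lemma base_perm_delete_top : base_perm n (delete_at (index n.+1 (base w)) w).
Proof.
rewrite /base_perm base_delete_at -perm_cons_iota.
have lt_p : index n.+1 (base w) < size (base w) by rewrite index_mem top_in_base.
have := perm_nth_take_drop 0 lt_p; rewrite nth_index ?top_in_base // => w_split.
by rewrite -(permPl w_split).
Qed.

End TopLetter.

Lemma colors_lt_delete r p w : colors_lt r w -> colors_lt r (delete_at p w).
Proof.
move/allP=> w_col; apply/allP => x.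
by rewrite mem_cat => /orP[/mem_take | /mem_drop]; apply: w_col.
Qed.

Definition negmod (r z : nat) : nat := (r - z %% r) %% r.

Lemma negmodK r z : 0 < r -> negmod r (negmod r z) = z %% r.
Proof.
move=> r_gt0; rewrite /negmod; have [z0 | z_gt0] := posnP (z %% r).
  by rewrite z0 subn0 modnn mod0n subn0 modnn.
have lt_rz : r - z %% r < r by rewrite ltn_subrL z_gt0 r_gt0.
by rewrite !(modn_small lt_rz) subKn ?modn_mod // ltnW ?ltn_pmod.
Qed.

Lemma modn_add_subK r x e : e <= r -> ((x + e) %% r + r - e) %% r = x %% r.
Proof.
move=> le_er; apply/eqP; rewrite -(eqn_modDr e) subnK ?modnDr ?modn_mod //.
by rewrite (leq_trans le_er) ?leq_addl.
Qed.

Definition bcode_color (r j : nat) (w : word) : nat :=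
  negmod r (nth (0,0) w (index j.+1 (base w))).2.

Definition bcode_next (r j : nat) (w : word) : word :=
  let p := index j.+1 (base w) in
  let last_letter := nth (0,0) w j in
  if p < j
  then take j (set_nth (0,0) w p
                 (last_letter.1, (last_letter.2 + r - bcode_color r j w) %% r))
  else take j w.

Lemma bcode_recS r j w : bcode_rec r j.+1 w =
  rcons (bcode_rec r j (bcode_next r j w)) ((index j.+1 (base w)).+1, bcode_color r j w).
Proof. by []. Qed.

Lemma acode_recS j w : acode_rec j.+1 w =
  rcons (acode_rec j (delete_at (index j.+1 (base w)) w))
        ((index j.+1 (base w)).+1, (nth (0,0) w (index j.+1 (base w))).2).
Proof. by []. Qed.

Lemma base_perm_bcode_next r j w : base_perm j.+1 w -> base_perm j (bcode_next r j w).
Proof.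
case/lastP: w => [|t l] w_perm; first by have := size_base_perm w_perm.
have size_t : size t = j by have := size_base_perm w_perm; rewrite size_rcons => -[].
have last_w : nth (0,0) (rcons t l) j = l by rewrite nth_rcons size_t ltnn eqxx.
have t_perm : perm_eq (l.1 :: base t) (iota 1 j.+1).
  by rewrite -perm_rcons -map_rcons.
have lt_pj1 := index_top_lt w_perm; have top := nth_index_top w_perm.
rewrite /bcode_next last_w; set p := index j.+1 _ in lt_pj1 top *.
rewrite nth_rcons size_t in top.
case: ltnP => [lt_pj | ge_pj].
- rewrite lt_pj in top.
  rewrite set_nth_rcons ?size_t // -cats1 take_size_cat; last first.
    by rewrite size_set_nth size_t (maxn_idPr lt_pj).
  rewrite /base_perm base_set_nth ?size_t //= -perm_cons_iota.
  have lt_pt : p < size (base t) by rewrite size_map size_t.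
  have := perm_trans (perm_nth_set_nth 0 l.1 lt_pt) t_perm.
  by rewrite nth_base top.
- have pj : p = j by apply/eqP; rewrite eqn_leq ge_pj -ltnS lt_pj1.
  rewrite pj ltnn eqxx in top.
  by rewrite -cats1 take_size_cat // /base_perm -perm_cons_iota -[X in X :: _]top.
Qed.

Lemma nth_bcode_next r j w i : i < index j.+1 (base w) -> i < j ->
  nth (0,0) (bcode_next r j w) i = nth (0,0) w i.
Proof.
move=> lt_ip lt_ij; rewrite /bcode_next.
by case: ifP => _; rewrite nth_take // ?nth_set_nth /= ?ltn_eqF.
Qed.

(* The letter moved to the end gets its color raised by e, which the B-code
   step lowers again. *)
Definition bcode_unstep (r j : nat) (w : word) (p e : nat) : word :=
  let moved := nth (0,0) w p in
  if p < j
  then rcons (set_nth (0,0) w p (j.+1, negmod r e)) (moved.1, (moved.2 + e) %% r)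
  else rcons w (j.+1, negmod r e).

Section Unstep.

Variables (r j : nat) (w : word) (p e : nat).
Hypotheses (r_gt0 : 0 < r) (w_perm : base_perm j w) (w_col : colors_lt r w).
Hypotheses (le_pj : p <= j) (lt_er : e < r).

Let size_w : size w = j := size_base_perm w_perm.

Lemma base_perm_unstep : base_perm j.+1 (bcode_unstep r j w p e).
Proof.
rewrite /base_perm /bcode_unstep; case: ifP => [lt_pj | _].
- rewrite /base map_rcons -/(base _) base_set_nth ?size_w //= perm_rcons.
  rewrite -nth_base; apply: perm_trans (perm_nth_set_nth _ _ _) _.
    by rewrite size_map size_w.
  by rewrite perm_cons_iota.
- by rewrite /base map_rcons perm_rcons perm_cons_iota.
Qed.

Lemma colors_lt_unstep : colors_lt r (bcode_unstep r j w p e).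
Proof.
rewrite /colors_lt /bcode_unstep; case: ifP => [lt_pj | _];
  rewrite all_rcons /= ltn_pmod //=.
by apply: all_set_nth; rewrite ?size_w //= ltn_pmod.
Qed.

Lemma nth_unstep : nth (0,0) (bcode_unstep r j w p e) p = (j.+1, negmod r e).
Proof.
rewrite /bcode_unstep; case: ltnP => [lt_pj | ge_pj].
  by rewrite nth_rcons size_set_nth size_w (maxn_idPr lt_pj) lt_pj nth_set_nth /= eqxx.
have -> : p = j by apply/eqP; rewrite eqn_leq le_pj.
by rewrite nth_rcons size_w ltnn eqxx.
Qed.

Lemma index_unstep : index j.+1 (base (bcode_unstep r j w p e)) = p.
Proof.
have uniq_w' : uniq (base (bcode_unstep r j w p e)).
  by rewrite (perm_uniq base_perm_unstep) iota_uniq.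
have lt_p : p < size (base (bcode_unstep r j w p e)).
  by rewrite (perm_size base_perm_unstep) size_iota ltnS.
have nth_p : nth 0 (base (bcode_unstep r j w p e)) p = j.+1.
  by rewrite nth_base nth_unstep.
by rewrite -{1}nth_p index_uniq.
Qed.

Lemma bcode_color_unstep : bcode_color r j (bcode_unstep r j w p e) = e.
Proof. by rewrite /bcode_color index_unstep nth_unstep negmodK // modn_small. Qed.

Lemma bcode_next_unstep : bcode_next r j (bcode_unstep r j w p e) = w.
Proof.
rewrite /bcode_next index_unstep bcode_color_unstep /bcode_unstep.
case: ltnP => [lt_pj | ge_pj]; last by rewrite -cats1 take_size_cat.
set u := set_nth _ w p _; have size_u : size u = j.
  by rewrite size_set_nth size_w (maxn_idPr lt_pj).
rewrite nth_rcons size_u ltnn eqxx /= set_nth_rcons ?size_u //.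
rewrite -cats1 take_size_cat; last by rewrite size_set_nth size_u (maxn_idPr lt_pj).
have lt_pw : p < size w by rewrite size_w.
have col_p : (nth (0,0) w p).2 < r by apply: (all_nthP (0,0) w_col).
rewrite set_set_nth eqxx modn_add_subK ?(ltnW lt_er) // modn_small //.
by rewrite -surjective_pairing set_nth_nth.
Qed.

Lemma bcode_rec_unstep :
  bcode_rec r j.+1 (bcode_unstep r j w p e) = rcons (bcode_rec r j w) (p.+1, e).
Proof. by rewrite bcode_recS bcode_next_unstep index_unstep bcode_color_unstep. Qed.

End Unstep.

Definition in_CS (r : nat) (c : code) : bool :=
  all (fun ic : nat * (nat * nat) => (0 < ic.2.1 <= ic.1) && (ic.2.2 < r))
      (zip (iota 1 (size c)) c).

Lemma in_CS_rcons r c x :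
  in_CS r (rcons c x) = [&& in_CS r c, 0 < x.1 <= (size c).+1 & x.2 < r].
Proof.
by rewrite /in_CS size_rcons iota_rcons zip_rcons ?size_iota // all_rcons andbC.
Qed.

Lemma size_acode_rec j w : size (acode_rec j w) = j.
Proof. by elim: j w => //= j IH w; rewrite size_rcons IH. Qed.

Lemma acode_rec_in_CS r j w : base_perm j w -> colors_lt r w -> in_CS r (acode_rec j w).
Proof.
elim: j w => [|j IH] w w_perm w_col //.
rewrite acode_recS in_CS_rcons size_acode_rec.
rewrite IH ?base_perm_delete_top ?colors_lt_delete // index_top_lt //=.
by apply: (all_nthP (0,0) w_col); rewrite (size_base_perm w_perm) index_top_lt.
Qed.

Lemma bcode_rec_surj r c : 0 < r -> in_CS r c ->
  exists2 w, base_perm (size c) w && colors_lt r w & bcode_rec r (size c) w = c.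
Proof.
move=> r_gt0; elim/last_ind: c => [|c [p e] IH]; first by exists [::].
rewrite in_CS_rcons /= => /and3P[/IH[w /andP[w_perm w_col] w_code] /andP[p_gt0 le_p] lt_er].
have le_p1 : p.-1 <= size c by rewrite -ltnS prednK.
rewrite size_rcons; exists (bcode_unstep r (size c) w p.-1 e).
  by rewrite base_perm_unstep ?colors_lt_unstep.
by rewrite bcode_rec_unstep // prednK // w_code.
Qed.

Lemma nth_delete_at p (w : word) k : k < p ->
  nth (0,0) (delete_at p w) k = nth (0,0) w k.
Proof.
move=> lt_kp; rewrite /delete_at nth_cat size_take.
case: (ltnP p (size w)) => [_ | le_wp]; first by rewrite lt_kp nth_take.
case: (ltnP k (size w)) => [lt_kw | le_wk]; first by rewrite nth_take.
by rewrite drop_oversize ?nth_nil ?nth_default // leqW.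
Qed.

Lemma bcode_acode_prefix_max r j w s :
  base_perm j w -> base_perm j s -> bcode_rec r j w = acode_rec j s ->
  forall i, i < j -> nth 0 (base w) i <= \max_(k < i.+1) nth 0 (base s) k.
Proof.
elim: j w s => [|j IH] w s w_perm s_perm + i //.
rewrite bcode_recS acode_recS => /rcons_inj[codes_eq pos_eq _] lt_ij.
set p := index j.+1 (base w) in pos_eq *; set q := index j.+1 (base s) in pos_eq *.
have [lt_ip | le_pi] := ltnP i p.
  have lt_ij' : i < j by rewrite (leq_trans lt_ip) // -ltnS index_top_lt.
  have same_w : nth 0 (base (bcode_next r j w)) i = nth 0 (base w) i.
    by rewrite !nth_base nth_bcode_next.
  have same_s : \max_(k < i.+1) nth 0 (base (delete_at q s)) k =
                \max_(k < i.+1) nth 0 (base s) k.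
    apply: eq_bigr => k _; rewrite !nth_base nth_delete_at //.
    by rewrite -pos_eq (leq_trans _ lt_ip) ?ltn_ord.
  rewrite -same_w -same_s.
  exact: IH (base_perm_bcode_next r w_perm) (base_perm_delete_top s_perm) codes_eq _ lt_ij'.
apply: leq_trans (base_le_top w_perm lt_ij) _.
have lt_qi : q < i.+1 by rewrite ltnS -pos_eq.
have := @leq_bigmax _ (fun k : 'I_i.+1 => nth 0 (base s) k) (Ordinal lt_qi).
by rewrite /= nth_base nth_index_top.
Qed.

Theorem lemma4p4 (r n : nat) (pi : word) :
  0 < r -> in_G r n pi ->
  (exists pi' : word, in_G r n pi' /\ Bcode r n pi' = Acode n pi) /\
  (forall pi' : word, in_G r n pi' -> Bcode r n pi' = Acode n pi ->
     in_Gf r n (minseq pi) pi').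
Proof.
move=> r_gt0; rewrite in_GE => /andP[pi_perm pi_col]; split.
  have [w] := bcode_rec_surj r_gt0 (acode_rec_in_CS pi_perm pi_col).
  by rewrite size_acode_rec -in_GE; exists w.
move=> w w_G w_code; rewrite /in_Gf w_G; apply/forallP => i.
rewrite /minseq nth_mkseq ?(size_base_perm pi_perm) //.
move: w_G; rewrite in_GE => /andP[w_perm _].
exact: bcode_acode_prefix_max w_perm pi_perm w_code _ (ltn_ord i).
Qed.
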